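(* Let $M$ be an Artinian $R$-module. If $M$ is an $M$-prime module, then $M$ is a homogeneous semisimple module, i.e. a direct sum of pairwise isomorphic simple modules.
   Context: $R$ is a ring with identity, modules are unital left $R$-modules. For $N\le M$ and a module $X$, $N\cdot X$ is the intersection of the kernels of all homomorphisms $X\to W$ where $W$ ranges over modules with $f(N)=0$ for all $f\in\mathrm{Hom}_R(M,W)$ (for $Y\le X$, $N\cdot Y$ is formed regarding $Y$ as a module). A module $X\neq0$ is an $M$-prime module if for all submodules $N\le M$ and $Y\le X$, $N\cdot Y=0$ implies $N\cdot X=0$ or $Y=0$. *)

From HB Require Import structures.
From Stdlib Require List.
From mathcomp Require Import all_boot all_order all_algebra.
Set Implicit Arguments. Unset Strict Implicit. Unset Printing Implicit Defensive.
Import GRing.Theory.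
Local Open Scope ring_scope.

Section ModuleDefs.
Variable R : pzRingType.

Definition is_submod (M : lmodType R) (S : M -> Prop) : Prop :=
  [/\ S 0, (forall x y, S x -> S y -> S (x + y)) & (forall (a : R) x, S x -> S (a *: x))].

(* g : X -> W restricted to the submodule Y is an R-module homomorphism Y -> W.
   (Homomorphisms out of the module Y are represented by functions on X whose
   restriction to Y is R-linear; values outside Y are irrelevant.) *)
Definition hom_on (X W : lmodType R) (Y : X -> Prop) (g : X -> W) : Prop :=
  forall (a : R) x y, Y x -> Y y -> g (a *: x + y) = a *: g x + g y.

Definition kills (M : lmodType R) (N : M -> Prop) (W : lmodType R) : Prop :=
  forall f : M -> W, hom_on (fun _ => True) f -> forall x, N x -> f x = 0.

(* N . Y  (for Y a submodule of X, regarded as a module): the intersection of the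
   kernels of all homomorphisms Y -> W, W ranging over modules killed (via Hom(M,W))
   by N. *)
Definition modprod (M : lmodType R) (N : M -> Prop) (X : lmodType R) (Y : X -> Prop)
  : X -> Prop :=
  fun x => Y x /\ forall W : lmodType R, kills N W ->
             forall g : X -> W, hom_on Y g -> g x = 0.

Definition is_zero (X : lmodType R) (S : X -> Prop) : Prop := forall x, S x -> x = 0.

Definition Mprime (M X : lmodType R) : Prop :=
  (exists x : X, x <> 0) /\
  forall (N : M -> Prop) (Y : X -> Prop), is_submod N -> is_submod Y ->
    is_zero (modprod N Y) -> is_zero (modprod N (fun _ : X => True)) \/ is_zero Y.

Definition artinian (M : lmodType R) : Prop :=
  forall S : nat -> M -> Prop, (forall n, is_submod (S n)) ->
    (forall n x, S n.+1 x -> S n x) ->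
    exists n, forall m, (n <= m)%N -> forall x, S m x <-> S n x.

Definition simple_submod (M : lmodType R) (Y : M -> Prop) : Prop :=
  is_submod Y /\ (exists y, Y y /\ y <> 0) /\
  forall Z : M -> Prop, is_submod Z -> (forall z, Z z -> Y z) ->
    is_zero Z \/ (forall z, Y z -> Z z).

Definition iso_submod (M : lmodType R) (Y1 Y2 : M -> Prop) : Prop :=
  exists g : M -> M, [/\ hom_on Y1 g, (forall x, Y1 x -> Y2 (g x)),
    (forall x y, Y1 x -> Y1 y -> g x = g y -> x = y) &
    (forall z, Y2 z -> exists x, Y1 x /\ g x = z)].

Definition in_sum (M : lmodType R) (I : Type) (P : I -> Prop) (Y : I -> M -> Prop)
  (x : M) : Prop :=
  exists s : seq (I * M), (forall p, List.In p s -> P p.1 /\ Y p.1 p.2) /\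
    x = \sum_(p <- s) p.2.

Definition direct_sum (M : lmodType R) (I : Type) (Y : I -> M -> Prop) : Prop :=
  (forall i, is_submod (Y i)) /\
  (forall x, in_sum (fun _ => True) Y x) /\
  (forall i x, Y i x -> in_sum (fun j => j <> i) Y x -> x = 0).

Definition homogeneous_semisimple (M : lmodType R) : Prop :=
  exists (I : Type) (Y : I -> M -> Prop), direct_sum Y /\
    (forall i, simple_submod (Y i)) /\ (forall i j, iso_submod (Y i) (Y j)).

End ModuleDefs.

(* By the descending chain condition every nonempty family of submodules
   of M has a minimal member; in particular M has a minimal nonzero (i.e. simple)
   submodule S.  M-primeness, applied to a nonzero submodule K and to S, yields an
   endomorphism of M with image in S that does not vanish on K: otherwise K kills
   S regarded as a module, so K.S = 0, and primeness forces K.M = 0 (impossible,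
   since the identity of M does not kill K) or S = 0.  Hence the common kernel of
   a finite family f_0, ..., f_(n-1) of endomorphisms with image in S can always
   be shrunk while it is nonzero, and the descending chain condition provides a
   family whose common kernel is 0; take one of minimal length n.  Let Y_i be the
   common kernel of the f_j with j <> i.  Then f_i is injective on Y_i, Y_i is
   nonzero by minimality of n, and f_i maps every nonzero submodule of Y_i onto S
   by simplicity of S; so each Y_i is simple and isomorphic to S.  Finally M is
   the direct sum of the Y_i: x is the sum of the preimages in Y_i of f_i x. *)

From HB Require Import structures.
From mathcomp Require Import all_boot all_order all_algebra.
From mathcomp Require Import boolp zify.
Set Implicit Arguments. Unset Strict Implicit. Unset Printing Implicit Defensive.
Import GRing.Theory.
Local Open Scope ring_scope.

Notation is_hom f := (hom_on (fun _ => True) f).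

Section SubmoduleFacts.
Variables (R : pzRingType) (M : lmodType R) (Y : M -> Prop).
Hypothesis HY : is_submod Y.

Lemma sub0 : Y 0. Proof. by case: HY. Qed.
Lemma subD x y : Y x -> Y y -> Y (x + y). Proof. by case: HY => _ + _; apply. Qed.
Lemma subZ a x : Y x -> Y (a *: x). Proof. by case: HY => _ _; apply. Qed.
Lemma subN x : Y x -> Y (- x). Proof. by rewrite -scaleN1r; apply: subZ. Qed.
Lemma subB x y : Y x -> Y y -> Y (x - y).
Proof. by move=> Yx Yy; apply: subD => //; apply: subN. Qed.

End SubmoduleFacts.

Section HomFacts.
Variables (R : pzRingType) (X W : lmodType R) (f : X -> W).
Hypothesis hf : is_hom f.

Lemma hom0 : f 0 = 0.
Proof.
have f00 := @hf 1 0 0 I I; rewrite scaler0 addr0 scale1r in f00.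
by apply: (@addrI _ (f 0)); rewrite addr0 -f00.
Qed.
Lemma homD x y : f (x + y) = f x + f y.
Proof. by have := @hf 1 x y I I; rewrite !scale1r. Qed.
Lemma homZ a x : f (a *: x) = a *: f x.
Proof. by have := @hf a x 0 I I; rewrite !addr0 hom0 addr0. Qed.
Lemma homB x y : f (x - y) = f x - f y.
Proof. by rewrite homD -!scaleN1r homZ. Qed.
Lemma hom_sum (I : Type) (s : seq I) (G : I -> X) :
  f (\sum_(p <- s) G p) = \sum_(p <- s) f (G p).
Proof. exact: (big_morph f homD hom0). Qed.

End HomFacts.

(* A submodule Y of M, regarded as a module in its own right: the subtype of
   elements of Y, with the operations of M.  It is needed to apply M-primeness,
   whose definition quantifies over modules W. *)
Section SubmoduleAsModule.
Variables (R : pzRingType) (M : lmodType R) (Y : M -> Prop).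

Definition mem_submod : pred M := fun x => `[< Y x >].

(* The carrier is indexed by the proof that Y is a submodule, so that the module
   structure built from that proof can be found by canonical instance search. *)
Inductive submod_type (HY : is_submod Y) : predArgType :=
  SubmodElt x of mem_submod x.

Hypothesis HY : is_submod Y.

Lemma mem_submod_closed : GRing.submod_closed mem_submod.
Proof.
split; first exact/asboolP/(sub0 HY).
by move=> a x y /asboolP Yx /asboolP Yy; apply/asboolP/(subD HY) => //; apply: subZ.
Qed.

HB.instance Definition _ :=
  GRing.isSubmodClosed.Build R M mem_submod mem_submod_closed.

Definition submod_val (u : submod_type HY) : M := let: SubmodElt x _ := u in x.
HB.instance Definition _ := [isSub of submod_type HY for submod_val].
HB.instance Definition _ := [Choice of submod_type HY by <:].
HB.instance Definition _ := [SubChoice_isSubZmodule of submod_type HY by <:].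
HB.instance Definition _ := [SubZmodule_isSubLmodule of submod_type HY by <:].

Lemma submod_valP (u : submod_type HY) : Y (val u).
Proof. by case: u => x /= /asboolP. Qed.

Definition to_submod (x : M) : submod_type HY := insubd 0 x.

Lemma to_submodK x : Y x -> val (to_submod x) = x.
Proof. by move=> Yx; rewrite val_insubd ifT //; exact/asboolP. Qed.

Lemma to_submod_hom : hom_on Y to_submod.
Proof.
move=> a x y Yx Yy; apply: val_inj.
by rewrite /= !to_submodK //; apply: (subD HY) => //; apply: subZ.
Qed.

End SubmoduleAsModule.

Section Artinian.
Variables (R : pzRingType) (M : lmodType R).
Hypothesis art : artinian M.

(* Minimality principle: a nonempty family of submodules of an Artinian module
   has a minimal member (otherwise dependent choice builds a strictly
   descending chain). *)
Lemma artinian_minimal (P : (M -> Prop) -> Prop) :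
  (forall Z, P Z -> is_submod Z) -> (exists Z, P Z) ->
  exists Z, P Z /\
    forall Z', P Z' -> (forall x, Z' x -> Z x) -> forall x, Z x -> Z' x.
Proof.
move=> Psub [Z0 PZ0]; apply: contrapT => noMin.
have shrink : forall Z : {Z | P Z}, exists Z' : {Z | P Z},
    (forall x, sval Z' x -> sval Z x) /\ exists x, sval Z x /\ ~ sval Z' x.
  move=> [Z PZ]; apply: contrapT => noSmaller; apply: noMin.
  exists Z; split => // Z' PZ' Z'Z x Zx; apply: contrapT => Z'x.
  by apply: noSmaller; exists (exist _ Z' PZ'); split => //; exists x.
have [next hnext] := choice shrink.
pose chain n := iter n next (exist _ Z0 PZ0).
have [n stable] := art (fun n => Psub _ (svalP (chain n)))
  (fun n => proj1 (hnext (chain n))).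
have [_ [x [Znx notZn1x]]] := hnext (chain n).
by apply: notZn1x; apply/(stable n.+1 (leqnSn n)).
Qed.

End Artinian.

Section Simple.
Variables (R : pzRingType) (M : lmodType R).

Definition nonzero_submod (Z : M -> Prop) := is_submod Z /\ exists z, Z z /\ z <> 0.

Definition minimal_nonzero (S : M -> Prop) :=
  nonzero_submod S /\
  forall Z, nonzero_submod Z -> (forall x, Z x -> S x) -> forall x, S x -> Z x.

Lemma exists_minimal_nonzero :
  artinian M -> (exists x : M, x <> 0) -> exists S, minimal_nonzero S.
Proof.
move=> art [x nx]; apply: artinian_minimal => //; first by move=> Z [].
by exists (fun _ => True); split; [split | exists x].
Qed.

End Simple.

Section Separation.
Variables (R : pzRingType) (M : lmodType R) (S : M -> Prop).
Hypothesis art : artinian M.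
Hypothesis prime : Mprime M M.
Hypothesis S_nz : nonzero_submod S.

Definition maps_into (f : M -> M) := is_hom f /\ forall x, S (f x).

Lemma prime_separates (K : M -> Prop) : nonzero_submod K ->
  exists f, maps_into f /\ exists k, K k /\ f k <> 0.
Proof.
move=> [HK [k0 [Kk0 nk0]]]; apply: contrapT => noSep.
have K_killed : forall f, maps_into f -> forall k, K k -> f k = 0.
  move=> f f_into k Kk; apply: contrapT => fk; apply: noSep.
  by exists f; split => //; exists k.
have HS := proj1 S_nz.
have KS0 : is_zero (modprod K S).
  move=> x [Sx x_in]; rewrite -(to_submodK HS Sx).
  suff -> : to_submod HS x = 0 by [].
  have S_killed : kills K (submod_type HS).
    move=> h h_hom k Kk; apply: val_inj => /=.
    apply: (K_killed (fun m => val (h m))) => //; split => [a y z _ _|m].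
      by rewrite (h_hom a y z I I).
    exact: submod_valP.
  exact: x_in _ S_killed _ (to_submod_hom HS).
have [KM0 | S0] := proj2 prime K S HK HS KS0.
  (* k0 lies in K.M, since every homomorphism out of M into a module killed by K
     vanishes on K. *)
  by apply: nk0; apply: KM0; split => // W KW g g_hom; apply: KW.
by case: S_nz => _ [z [Sz nz]]; apply: nz; apply: S0.
Qed.

Definition family_into n (F : nat -> M -> M) := forall j, (j < n)%N -> maps_into (F j).
Definition common_kernel n (F : nat -> M -> M) x := forall j, (j < n)%N -> F j x = 0.

Lemma common_kernel_submod n F : family_into n F -> is_submod (common_kernel n F).
Proof.
move=> homF; split.
- by move=> j /homF [hf _]; apply: hom0.
- by move=> x y Fx Fy j lj; have [hf _] := homF j lj; rewrite homD // Fx ?Fy ?addr0.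
- by move=> a x Fx j lj; have [hf _] := homF j lj; rewrite homZ // Fx ?scaler0.
Qed.

(* Some finite family separates the points of M: take a family with minimal
   common kernel and extend it using the separation lemma. *)
Lemma exists_separating_family :
  exists n F, family_into n F /\ is_zero (common_kernel n F).
Proof.
pose P Z := exists n F, family_into n F /\ Z = common_kernel n F.
have P_sub Z : P Z -> is_submod Z.
  by move=> [n [F [homF ->]]]; apply: common_kernel_submod.
have P_empty_family : P (common_kernel 0 (fun _ => id)) by exists 0, (fun _ => id).
have [Z [[n [F [homF ->]]] minZ]] :=
  artinian_minimal art P_sub (ex_intro _ _ P_empty_family).
exists n, F; split => // x Fx; apply: contrapT => nx.
have [f [f_into [k [Fk fk]]]] :=
  prime_separates (conj (common_kernel_submod homF) (ex_intro _ x (conj Fx nx))).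
pose F' j := if j is j'.+1 then F j' else f.
have homF' : family_into n.+1 F' by case=> [|j] lj //=; apply: homF.
have F'F y : common_kernel n.+1 F' y -> common_kernel n F y.
  by move=> F'y j; apply: (F'y j.+1).
have PF' : P (common_kernel n.+1 F') by exists n.+1, F'.
by apply: fk; apply: (minZ _ PF' F'F k Fk 0).
Qed.

Lemma exists_minimal_separating_family :
  exists n F, (family_into n F /\ is_zero (common_kernel n F)) /\
    forall m G, family_into m G -> is_zero (common_kernel m G) -> (n <= m)%N.
Proof.
have [n0 [F0 sepF0]] := exists_separating_family.
have exP : exists n, `[< exists F, family_into n F /\ is_zero (common_kernel n F) >].
  by exists n0; apply/asboolP; exists F0.
have [n /asboolP [F sepF] minn] := ex_minnP exP.
by exists n, F; split => // m G homG sepG; apply: minn; apply/asboolP; exists G.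
Qed.

End Separation.

Section Decomposition.
Variables (R : pzRingType) (M : lmodType R) (S : M -> Prop).
Hypothesis S_min : minimal_nonzero S.
Variables (n : nat) (F : nat -> M -> M).
Hypothesis F_into : family_into S n F.
Hypothesis F_sep : is_zero (common_kernel n F).
Hypothesis F_min :
  forall m G, family_into S m G -> is_zero (common_kernel m G) -> (n <= m)%N.

Definition component i x := forall j, (j < n)%N -> j != i -> F j x = 0.

Lemma component_submod i : is_submod (component i).
Proof.
split.
- by move=> j /F_into [hf _] _; apply: hom0.
- move=> x y Yx Yy j lj ji; have [hf _] := F_into lj.
  by rewrite homD // Yx ?Yy ?addr0.
- by move=> a x Yx j lj ji; have [hf _] := F_into lj; rewrite homZ // Yx ?scaler0.
Qed.

Lemma component_ker i x : (i < n)%N -> component i x -> F i x = 0 -> x = 0.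
Proof.
move=> li Yx Fix; apply: F_sep => j lj.
by case: (eqVneq j i) => [-> // | ji]; apply: Yx.
Qed.

Lemma component_inj i u v :
  (i < n)%N -> component i u -> component i v -> F i u = F i v -> u = v.
Proof.
move=> li Yu Yv Fuv; have [hf _] := F_into li.
apply/eqP; rewrite -subr_eq0; apply/eqP; apply: (component_ker li).
  exact: subB (component_submod i) _ _ Yu Yv.
by rewrite homB // Fuv subrr.
Qed.

(* Y_i <> 0: otherwise dropping f_i gives a shorter separating family. *)
Lemma component_nonzero i : (i < n)%N -> exists y, component i y /\ y <> 0.
Proof.
move=> li; apply: contrapT => Yi0.
pose G j := if (j < i)%N then F j else F j.+1.
have G_into : family_into S n.-1 G.
  by move=> j lj; rewrite /G; case: ifP => _; apply: F_into; lia.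
suff G_sep : is_zero (common_kernel n.-1 G) by have := F_min G_into G_sep; lia.
move=> x Gx; apply: contrapT => nx; apply: Yi0; exists x; split => // j lj ji.
have [lt_ji | le_ij] := ltnP j i; first by have := Gx j ltac:(lia); rewrite /G lt_ji.
have := Gx j.-1 ltac:(lia); rewrite /G ifF; last by lia.
by have -> : j.-1.+1 = j by lia.
Qed.

Lemma component_onto_sub i (Z : M -> Prop) : (i < n)%N -> nonzero_submod Z ->
  (forall z, Z z -> component i z) -> forall s, S s -> exists x, Z x /\ F i x = s.
Proof.
move=> li [HZ [z [Zz nz]]] ZY; have [hf Sf] := F_into li.
pose T s := exists x, Z x /\ F i x = s.
have T_nz : nonzero_submod T.
  split; first split.
  - by exists 0; split; [apply: sub0 | apply: hom0].
  - move=> _ _ [x [Zx <-]] [y [Zy <-]].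
    by exists (x + y); split; [apply: subD | apply: homD].
  - by move=> a _ [x [Zx <-]]; exists (a *: x); split; [apply: subZ | apply: homZ].
  exists (F i z); split; first by exists z.
  by move=> Fz; apply: nz; apply: component_ker li (ZY _ Zz) Fz.
by apply: (proj2 S_min) T_nz _; move=> _ [x [_ <-]].
Qed.

Lemma component_onto i :
  (i < n)%N -> forall s, S s -> exists x, component i x /\ F i x = s.
Proof.
move=> li; apply: component_onto_sub => //.
by split; [apply: component_submod | apply: component_nonzero].
Qed.

(* Y_i is simple: a nonzero submodule Z of Y_i has f_i Z = S = f_i Y_i, and
   f_i is injective on Y_i. *)
Lemma component_simple i : (i < n)%N -> simple_submod (component i).
Proof.
move=> li; split; first exact: component_submod.
split; first exact: component_nonzero.
move=> Z HZ ZY; case: (pselect (is_zero Z)) => [| Znz]; [by left | right].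
have Z_nz : nonzero_submod Z.
  split => //; apply: contrapT => noZ; apply: Znz => z Zz.
  by apply: contrapT => nz; apply: noZ; exists z.
move=> y Yy; have [hf Sf] := F_into li.
have [z [Zz Fzy]] := component_onto_sub li Z_nz ZY (Sf y).
by rewrite -(component_inj li (ZY _ Zz) Yy Fzy).
Qed.

(* Y_i and Y_j are isomorphic: both are mapped isomorphically onto S, and
   x in Y_i goes to the preimage in Y_j of f_i x. *)
Lemma component_iso i j :
  (i < n)%N -> (j < n)%N -> iso_submod (component i) (component j).
Proof.
move=> li lj; have [hfi Sfi] := F_into li; have [hfj Sfj] := F_into lj.
have [g gP] := choice (fun x => component_onto lj (Sfi x)).
have Yg x : component j (g x) := proj1 (gP x).
have Fg x : F j (g x) = F i x := proj2 (gP x).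
exists g; split => //.
- move=> a x y _ _; apply: (component_inj lj (Yg _)).
    have Yj := component_submod j.
    by apply: (subD Yj) (Yg y); apply: (subZ Yj).
  by rewrite (homD hfj) (homZ hfj) !Fg (homD hfi) (homZ hfi).
- by move=> x y Yx Yy gxy; apply: (component_inj li Yx Yy); rewrite -!Fg gxy.
- move=> z Yz; have [x [Yx Fxz]] := component_onto li (Sfj z).
  by exists x; split => //; apply: (component_inj lj (Yg x) Yz); rewrite Fg.
Qed.

(* Every x is the sum over i of the preimage in Y_i of f_i x. *)
Lemma components_span x : in_sum (fun _ => True) (fun i : 'I_n => component i) x.
Proof.
have [e eP] := choice (fun i : 'I_n =>
  component_onto (ltn_ord i) (proj2 (F_into (ltn_ord i)) x)).
exists [seq (i, e i) | i <- index_enum 'I_n]; split.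
  move=> p; elim: (index_enum 'I_n) => //= a l IH [<- | /IH] //=.
  by split => //; apply: (proj1 (eP a)).
rewrite big_map; apply/eqP; rewrite -subr_eq0; apply/eqP; apply: F_sep => j lj.
have [hf _] := F_into lj.
rewrite homB // hom_sum // (bigD1 (Ordinal lj)) //= (proj2 (eP (Ordinal lj))) /=.
rewrite big1 ?addr0 ?subrr // => i ij; apply: (proj1 (eP i)) => //.
by apply: contra ij => /eqP ji; apply/eqP/val_inj.
Qed.

(* A sum of elements of the Y_j, j <> i, is killed by f_i; so it lies in Y_i
   only if it is zero. *)
Lemma components_independent (i : 'I_n) x :
  component i x -> in_sum (fun j => j <> i) (fun j : 'I_n => component j) x -> x = 0.
Proof.
move=> Yx [s [sP xE]]; subst x; apply: (component_ker (ltn_ord i) Yx); clear Yx.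
have [hf _] := F_into (ltn_ord i).
rewrite hom_sum //; elim: s sP => [|p s IH] sP; first by rewrite big_nil.
rewrite big_cons IH; last by move=> q sq; apply: sP; right.
have [pi Yp] := sP p (or_introl erefl).
by rewrite (Yp i (ltn_ord i)) ?addr0 //; apply/eqP => ip; apply: pi; apply: ord_inj.
Qed.

Lemma components_homogeneous_semisimple : homogeneous_semisimple M.
Proof.
exists 'I_n, (fun i : 'I_n => component i); split.
  split; [by move=> i; apply: component_submod | split].
  - exact: components_span.
  - exact: components_independent.
split=> [i | i j]; first exact: component_simple.
exact: component_iso.
Qed.

End Decomposition.

Theorem proposition5p1 (R : pzRingType) (M : lmodType R) :
  artinian M -> Mprime M M -> homogeneous_semisimple M.
Proof.
move=> art prime.
have [S S_min] := exists_minimal_nonzero art (proj1 prime).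
have [n [F [[F_into F_sep] F_min]]] :=
  exists_minimal_separating_family art prime (proj1 S_min).
exact: (components_homogeneous_semisimple S_min F_into F_sep F_min).
Qed.
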